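(* Let $\mathbf{P}$ be a probability distribution on $\mathbb{R}^D$ whose samples lie in a bounded box $\prod_{d=1}^D[\lambda,\mu]$, and let $U>0$. Fix $0<a<b$ and a latent dimension $K$, and let $\mathcal{C}^\dagger_{\mathbf{P},\frac12 U}$ be the set of Spectrum VAEs $(\phi,\theta)$ (with these $a,b,K$) that are essentially compatible with $\mathbf{P}$ given $\frac12 U$. Define $$\mathrm{MDL}^\dagger_U=\inf_{(\phi,\theta)\in\mathcal{C}^\dagger_{\mathbf{P},\frac12U}}\log_2\Big(\sum_{m=1}^M|\mathcal{P}_m|_{\frac12U}\Big),$$ where, for each $(\phi,\theta)$, $\mathcal{P}_1,\dots,\mathcal{P}_M$ are all the spiking patterns of spectra $\phi(\mathbf{x})$ with $\mathbf{x}$ drawn from $\mathbf{P}$, and $|\mathcal{P}_m|_{\frac12U}$ is the $\frac12U$-complexity of $\mathcal{P}_m$ with respect to $\theta$. Then $\mathrm{MDL}^\dagger_U\ge\log_2(\mathcal{E}_{\mathbf{P},U})$, where $\mathcal{E}_{\mathbf{P},U}$ is the $U$-essence of $\mathbf{P}$.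
   Context: Spectrum VAE: given $0<a<b$, an encoder $\phi:\mathbb{R}^D\to\mathbb{R}^K$ first computes $\mathbf{z}_{\mathrm{pre}}\in\mathbb{R}^K$ and then sets, coordinatewise, $z_k=z_{\mathrm{pre},k}$ if $a\le z_{\mathrm{pre},k}\le b$, $z_k=b$ if $z_{\mathrm{pre},k}>b$, and $z_k=0$ if $z_{\mathrm{pre},k}<a$; the output $\mathbf{z}=\phi(\mathbf{x})$ is called a spectrum, so each $z_k\in\{0\}\cup[a,b]$. A decoder $\theta:\mathbb{R}^K\to\mathbb{R}^D$ produces $\tilde{\mathbf{x}}=\theta(\mathbf{z})$; distances are Euclidean $\|\cdot\|_2$. The spiking pattern of a spectrum $\mathbf{z}$ is the set $\{k: z_k\ge a\}$ (which is $\emptyset$ if $\mathbf{z}=0$). Patterns and robustness: a pattern is a set $\mathcal{P}=\{k_1,\dots,k_L\}\subseteq\{1,\dots,K\}$. A spectrum preserved by $\mathcal{P}$ is any $\mathbf{z}\in\mathbb{R}^K$ with $z_{k_l}\in[a,b]$ for $l=1,\dots,L$ and all other coordinates zero (for $\mathcal{P}=\emptyset$ this is only the zero vector). Given $\alpha_{k_1},\dots,\alpha_{k_L}>0$ and perturbations $\epsilon_{k_l}\in[-\alpha_{k_l},\alpha_{k_l}]$ (i.e. in the support of $\mathcal{U}(-\alpha_{k_l},\alpha_{k_l})$), the perturbed spectrum $\tilde{\mathbf{z}}$ has $\tilde z_{k_l}=\min(b,\max(a,z_{k_l}+\epsilon_{k_l}))$ and zero elsewhere. The decoder $\theta$ is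 $U$-robust w.r.t. $\mathcal{P}$ with the ($U$-qualified) boundaries $\{\alpha_{k_l}\}$ if $\|\theta(\mathbf{z})-\theta(\tilde{\mathbf{z}})\|_2\le U$ for every spectrum $\mathbf{z}$ preserved by $\mathcal{P}$ and every such perturbation. For such boundaries let $Q_{k_l}$ be the smallest integer larger than $(b-a)/(2\alpha_{k_l})$; divide $[a,b]$ in coordinate $k_l$ into $Q_{k_l}$ equal pieces and use their midpoints as quantization scales; the $U$-representation set is the set of the $\prod_{l=1}^LQ_{k_l}$ spectra preserved by $\mathcal{P}$ whose $k_l$-coordinates are quantization scales (size $1$ for $\mathcal{P}=\emptyset$). The $U$-complexity $|\mathcal{P}|_U$ is the minimum size of a $U$-representation set over all $U$-qualified choices of boundaries, and $|\mathcal{P}|_U=\infty$ if $\theta$ is not $U$-robust w.r.t. $\mathcal{P}$ for any boundaries. Essential compatibility: $(\phi,\theta)$ is essentially compatible with $\mathbf{P}$ given $U'$ if every sample $\mathbf{x}$ drawn from $\mathbf{P}$ satisfies $\|\mathbf{x}-\theta(\phi(\mathbf{x}))\|_2\le U'$. $U$-essence: $\mathcal{E}_{\mathbf{P},U}$ is the minimum cardinality of a finite set $S\subset\mathbb{R}^D$ such that every sample $\mathbf{x}$ drawn from $\mathbf{P}$ has some $\hat{\mathbf{x}}\in S$ with $\|\mathbf{x}-\hat{\mathbf{x}}\|_2\le U$. *)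

From HB Require Import structures.
From mathcomp Require Import all_boot all_order all_algebra.
From mathcomp Require Import finmap.
From mathcomp Require Import all_classical all_reals all_analysis.
Set Implicit Arguments. Unset Strict Implicit. Unset Printing Implicit Defensive.
Import Order.TTheory GRing.Theory Num.Theory.
Local Open Scope classical_set_scope.
Local Open Scope ring_scope.

Section SpectrumVAE.
Variable R : realType.

Definition enorm (n : nat) (v : 'rV[R]_n) : R :=
  Num.sqrt (\sum_(i < n) v ord0 i ^+ 2).

Definition log2e (x : \bar R) : \bar R :=
  match x with
  | r%:E => if r <= 0 then -oo%E else (ln r / ln 2)%:E
  | +oo%E => +oo%E
  | -oo%E => -oo%E
  end.

Variables (D K : nat) (a b : R).

Definition clamp_coord (t : R) : R :=
  if t < a then 0 else if b < t then b else t.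

Definition spectrum_of (zpre : 'rV[R]_K) : 'rV[R]_K :=
  \row_k clamp_coord (zpre ord0 k).

Definition encoder (phi_pre : 'rV[R]_D -> 'rV[R]_K) (x : 'rV[R]_D) : 'rV[R]_K :=
  spectrum_of (phi_pre x).

Definition spiking_pattern (z : 'rV[R]_K) : {set 'I_K} :=
  [set k | a <= z ord0 k].

Definition preserved_by (P : {set 'I_K}) (z : 'rV[R]_K) : Prop :=
  forall k, (k \in P -> a <= z ord0 k <= b) /\ (k \notin P -> z ord0 k = 0).

Definition perturbed (P : {set 'I_K}) (z eps : 'rV[R]_K) : 'rV[R]_K :=
  \row_k (if k \in P then Num.min b (Num.max a (z ord0 k + eps ord0 k)) else 0).

Definition robust (theta : 'rV[R]_K -> 'rV[R]_D) (U : R) (P : {set 'I_K})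
  (alpha : 'I_K -> R) : Prop :=
  forall z eps : 'rV[R]_K, preserved_by P z ->
    (forall k, k \in P -> - alpha k <= eps ord0 k <= alpha k) ->
    enorm (theta z - theta (perturbed P z eps)) <= U.

Definition Qnum (alpha : R) : nat := (Num.truncn ((b - a) / (2 * alpha))).+1.

Definition rep_set_size (P : {set 'I_K}) (alpha : 'I_K -> R) : nat :=
  (\prod_(k in P) Qnum (alpha k))%N.

Definition qualified (theta : 'rV[R]_K -> 'rV[R]_D) (U : R) (P : {set 'I_K})
  (alpha : 'I_K -> R) : Prop :=
  (forall k, k \in P -> 0 < alpha k) /\ robust theta U P alpha.

(* U-complexity; +oo when no U-qualified boundaries exist *)
Definition complexity (theta : 'rV[R]_K -> 'rV[R]_D) (U : R) (P : {set 'I_K})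
  : \bar R :=
  ereal_inf [set ((rep_set_size P alpha)%:R)%:E | alpha in qualified theta U P].

(* the distribution P is represented by its set of possible samples *)
Definition ess_compatible (samples : set 'rV[R]_D)
  (phi_pre : 'rV[R]_D -> 'rV[R]_K) (theta : 'rV[R]_K -> 'rV[R]_D) (U' : R) : Prop :=
  forall x, samples x -> enorm (x - theta (encoder phi_pre x)) <= U'.

Definition patterns (samples : set 'rV[R]_D) (phi_pre : 'rV[R]_D -> 'rV[R]_K)
  : {set {set 'I_K}} :=
  [set Pm | `[< exists2 x, samples x & spiking_pattern (encoder phi_pre x) = Pm >]].

Definition MDL_dagger (samples : set 'rV[R]_D) (U : R) : \bar R :=
  ereal_inf [set log2e (\sum_(Pm in patterns samples vae.1) complexity vae.2 (U / 2) Pm)%E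
            | vae in [set vae : ('rV[R]_D -> 'rV[R]_K) * ('rV[R]_K -> 'rV[R]_D) |
                        ess_compatible samples vae.1 vae.2 (U / 2)]].

End SpectrumVAE.

(* U-essence: minimal cardinality of a finite set S covering the samples
   within distance U (+oo if none exists, which cannot happen for bounded data) *)
Definition essence (R : realType) (D : nat) (samples : set 'rV[R]_D) (U : R)
  : \bar R :=
  ereal_inf [set ((#|` S|)%fset%:R)%:E | S in
     [set S : {fset 'rV[R]_D} |
        forall x, samples x -> exists2 xh, xh \in S & enorm (x - xh) <= U]].

(* Each sample x is within U/2 of θ(φ(x)), and the spectrum φ(x) is preserved by
   its own spiking pattern P.  If θ is U/2-robust w.r.t. P with boundaries α,
   then every spectrum preserved by P is an α-perturbation of a point of the
   representation set, since each coordinate lies within half a quantization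
   cell, which is shorter than α, of a quantization scale.  So, with optimal
   boundaries for every pattern, the decoded representation sets form a U-cover
   of the samples with at most Σ_m |P_m|_{U/2} points; if some pattern has no
   qualified boundaries that sum is +oo.  Monotonicity of log2 concludes. *)

From HB Require Import structures.
From mathcomp Require Import all_boot all_order all_algebra.
From mathcomp Require Import finmap.
From mathcomp Require Import all_classical all_reals all_analysis.
From mathcomp Require Import ring lra.
Set Implicit Arguments.
Unset Strict Implicit.
Import Order.TTheory GRing.Theory Num.Theory.
Local Open Scope classical_set_scope.
Local Open Scope ring_scope.

Section EuclideanNorm.
Variables (R : realType) (n : nat).

Lemma cauchy_schwarz_sum (u v : 'I_n -> R) :
  (\sum_i u i * v i) ^+ 2 <= (\sum_i u i ^+ 2) * (\sum_i v i ^+ 2).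
Proof.
have lagrange : \sum_i \sum_j (u i * v j - u j * v i) ^+ 2 =
    2 * ((\sum_i u i ^+ 2) * (\sum_i v i ^+ 2) - (\sum_i u i * v i) ^+ 2).
  have -> : \sum_i \sum_j (u i * v j - u j * v i) ^+ 2 =
      \sum_i \sum_j u i ^+ 2 * v j ^+ 2 + \sum_i \sum_j u j ^+ 2 * v i ^+ 2
      - 2 * \sum_i \sum_j (u i * v i) * (u j * v j).
    rewrite mulr_sumr -big_split /= -sumrB; apply: eq_bigr => i _.
    rewrite mulr_sumr -big_split /= -sumrB; apply: eq_bigr => j _; ring.
  by rewrite [X in _ + X - _]exchange_big /= expr2 !big_distrlr /=; ring.
rewrite -subr_ge0 -(pmulr_rge0 _ (ltr0n R 2)) -lagrange.
by apply: sumr_ge0 => i _; apply: sumr_ge0 => j _; exact: sqr_ge0.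
Qed.

Lemma enorm_ge0 (v : 'rV[R]_n) : 0 <= enorm v.
Proof. exact: sqrtr_ge0. Qed.

Lemma sqr_enorm (v : 'rV[R]_n) : enorm v ^+ 2 = \sum_i v ord0 i ^+ 2.
Proof. by rewrite sqr_sqrtr // sumr_ge0 // => i _; exact: sqr_ge0. Qed.

Lemma ler_enormD (u v : 'rV[R]_n) : enorm (u + v) <= enorm u + enorm v.
Proof.
have cs : \sum_i u ord0 i * v ord0 i <= enorm u * enorm v.
  apply: le_trans (ler_norm _) _.
  rewrite -sqrtr_sqr /enorm -sqrtrM ?ler_sqrt ?cauchy_schwarz_sum //.
    by rewrite mulr_ge0 // sumr_ge0 // => i _; exact: sqr_ge0.
  by rewrite sumr_ge0 // => i _; exact: sqr_ge0.
rewrite -(@ler_pXn2r _ 2) ?nnegrE ?addr_ge0 ?enorm_ge0 //.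
rewrite sqrrD !sqr_enorm.
have -> : \sum_i (u + v) ord0 i ^+ 2 = \sum_i u ord0 i ^+ 2
    + 2 * \sum_i u ord0 i * v ord0 i + \sum_i v ord0 i ^+ 2.
  rewrite mulr_sumr -!big_split /=; apply: eq_bigr => i _; rewrite mxE; ring.
lra.
Qed.

Lemma ler_enorm_distD (u v w : 'rV[R]_n) :
  enorm (v - w) <= enorm (v - u) + enorm (u - w).
Proof. by have := ler_enormD (v - u) (u - w); rewrite addrA subrK. Qed.

End EuclideanNorm.

Section ExtendedReals.
Variable R : realType.
Local Open Scope ereal_scope.

Lemma le_log2e (x y : \bar R) : x <= y -> log2e x <= log2e y.
Proof.
case: x => [r| |]; case: y => [s| |] //=; rewrite ?leey ?leNye // lee_fin => rs.
have [_|r_gt0] := lerP r 0; first by rewrite leNye.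
have s_gt0 := lt_le_trans r_gt0 rs.
rewrite [(s <= 0)%R]leNgt s_gt0 /= lee_fin ler_pM2r ?invr_gt0 ?ln_gt0 ?ltr1n //.
by rewrite ler_ln ?posrE.
Qed.

Lemma ereal_inf_nat_attained (T : Type) (S : set T) (f : T -> nat) :
  S !=set0 ->
  exists2 t, S t & ereal_inf [set (f t)%:R%:E | t in S] = (f t)%:R%:E :> \bar R.
Proof.
move=> [t0 St0].
have [|m /asboolP[t St ftm] min_m] :=
  ex_minnP (P := fun m => `[< exists2 t, S t & f t = m >]).
  by exists (f t0); apply/asboolP; exists t0.
exists t => //; apply/le_anti; rewrite ereal_inf_lbound /=; last by exists t.
apply: le_ereal_inf_tmp => _ [t' St' <-].
by rewrite lee_fin ler_nat ftm min_m //; apply/asboolP; exists t'.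
Qed.

End ExtendedReals.

Section Quantization.
Variable R : realType.

Lemma nat_bracket (Q : nat) (t : R) : (0 < Q)%N -> 0 <= t <= Q%:R ->
  exists2 m : nat, (m < Q)%N & m%:R <= t <= m%:R + 1.
Proof.
move=> Q_gt0 /andP[t_ge0 t_le]; have /andP[tr_le lt_tr] := trunc_itv t_ge0.
have [tr_lt|tr_ge] := ltnP (Num.truncn t) Q.
  by exists (Num.truncn t); rewrite // tr_le natr1 ltW.
have tQ : t = Q%:R by apply/le_anti; rewrite t_le (le_trans _ tr_le) ?ler_nat.
by exists Q.-1; rewrite ?prednK // tQ natr1 prednK // lexx ler_nat leq_pred.
Qed.

Variables (a b : R).
Hypothesis lt_ab : a < b.

Definition quant_scale (Q m : nat) : R := a + (m%:R + 2^-1) * ((b - a) / Q%:R).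

Lemma quant_scale_itv Q m : (m < Q)%N -> a <= quant_scale Q m <= b.
Proof.
move=> mQ; have Q_gt0 : 0 < Q%:R :> R by rewrite ltr0n (leq_ltn_trans _ mQ).
have w_gt0 : 0 < (b - a) / Q%:R by rewrite divr_gt0 // subr_gt0.
have mQ' : m%:R + 2^-1 <= Q%:R :> R.
  have : m.+1%:R <= Q%:R :> R by rewrite ler_nat.
  by rewrite -natr1; lra.
have le_ba : (m%:R + 2^-1) * ((b - a) / Q%:R) <= b - a.
  by rewrite (le_trans (ler_wpM2r (ltW w_gt0) mQ')) // mulrC divfK ?gt_eqF.
have : 0 <= (m%:R + 2^-1) * ((b - a) / Q%:R) by rewrite mulr_ge0 // ltW.
by rewrite /quant_scale; lra.
Qed.

Lemma quant_scale_near Q z : (0 < Q)%N -> a <= z <= b ->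
  exists2 m, (m < Q)%N & `|quant_scale Q m - z| <= (b - a) / (2 * Q%:R).
Proof.
move=> Q_gt0 /andP[az zb]; have Qr_gt0 : 0 < Q%:R :> R by rewrite ltr0n.
set w := (b - a) / Q%:R.
have w_gt0 : 0 < w by rewrite divr_gt0 // subr_gt0.
have [m mQ /andP[mt tm]] : exists2 m, (m < Q)%N & m%:R <= (z - a) / w <= m%:R + 1.
  apply: nat_bracket; rewrite // divr_ge0 ?subr_ge0 ?(ltW w_gt0) //=.
  by rewrite ler_pdivrMr // /w mulrC divfK ?gt_eqF //; lra.
exists m => //.
have -> : quant_scale Q m - z = (m%:R + 2^-1 - (z - a) / w) * w.
  by rewrite /quant_scale -/w [RHS]mulrBl divfK ?gt_eqF //; ring.
have -> : (b - a) / (2 * Q%:R) = 2^-1 * w by rewrite /w invfM; ring.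
by rewrite normrM (gtr0_norm w_gt0) ler_pM2r // ler_norml; apply/andP; split; lra.
Qed.

Lemma half_cell_lt al : 0 < al -> (b - a) / (2 * (Qnum a b al)%:R) < al.
Proof.
move=> al_gt0; have Q_gt0 : 0 < (Qnum a b al)%:R :> R by rewrite ltr0n.
have : (b - a) / (2 * al) < (Qnum a b al)%:R := truncnS_gt _.
rewrite !ltr_pdivrMr ?mulr_gt0 //.
by have -> : al * (2 * (Qnum a b al)%:R) = (Qnum a b al)%:R * (2 * al) by ring.
Qed.

Variable K : nat.

Definition grid_dim (P : {set 'I_K}) (al : 'I_K -> R) (k : 'I_K) : nat :=
  if k \in P then Qnum a b (al k) else 1.

(* [grid P al] indexes the representation set of [P] for the boundaries [al]:
   [c k] selects a quantization scale for [k \in P]; outside [P] the index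
   lives in ['I_1] and is ignored. *)
Definition grid (P : {set 'I_K}) (al : 'I_K -> R) : finType :=
  {dffun forall k : 'I_K, 'I_(grid_dim P al k)}.

Definition grid_spectrum (P : {set 'I_K}) (al : 'I_K -> R) (c : grid P al) :
    'rV[R]_K :=
  \row_k (if k \in P then quant_scale (Qnum a b (al k)) (c k) else 0).

Lemma card_grid (P : {set 'I_K}) (al : 'I_K -> R) :
  #|grid P al| = rep_set_size a b P al.
Proof.
rewrite card_dep_ffun foldrE big_map big_enum /rep_set_size [RHS]big_mkcond /=.
by apply: eq_bigr => k _; rewrite card_ord /grid_dim; case: ifP.
Qed.

Lemma grid_perturbation (P : {set 'I_K}) (al : 'I_K -> R) (z : 'rV[R]_K) :
  (forall k, k \in P -> 0 < al k) -> preserved_by a b P z ->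
  exists c : grid P al, exists2 eps : 'rV[R]_K,
    (forall k, k \in P -> - al k <= eps ord0 k <= al k) &
    grid_spectrum c = perturbed a b P z eps.
Proof.
move=> al_gt0 zP.
have near_k k : exists m : 'I_(grid_dim P al k), k \in P ->
    `|quant_scale (Qnum a b (al k)) m - z ord0 k| <= al k.
  have [kP|kNP] := boolP (k \in P); last first.
    by rewrite /grid_dim (negbTE kNP); exists ord0.
  have [m mQ near_m] := @quant_scale_near (Qnum a b (al k)) _ isT (proj1 (zP k) kP).
  rewrite /grid_dim kP; exists (Ordinal mQ) => _.
  by rewrite (le_trans near_m) // ltW // half_cell_lt // al_gt0.
have [f near_f] := fin_all_exists near_k.
pose c : grid P al := finfun f.
exists c, (grid_spectrum c - z).
  by move=> k kP; rewrite !mxE kP ffunE -ler_norml near_f.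
apply/rowP => k; rewrite !mxE; case: ifP => // kP.
have /andP[q_ge q_le] : a <= quant_scale (Qnum a b (al k)) (f k) <= b.
  by case: (f k) => m /=; rewrite /grid_dim kP => /quant_scale_itv.
by rewrite ffunE addrCA subrr addr0 max_r ?min_r.
Qed.

Lemma qualified_grid_cover D (theta : 'rV[R]_K -> 'rV[R]_D) (U : R)
    (P : {set 'I_K}) (al : 'I_K -> R) (z : 'rV[R]_K) :
  qualified a b theta U P al -> preserved_by a b P z ->
  exists c : grid P al, enorm (theta z - theta (grid_spectrum c)) <= U.
Proof.
move=> [al_gt0 robust_al] zP.
have [c [eps eps_bd grid_eq]] := grid_perturbation al_gt0 zP.
by exists c; rewrite grid_eq; apply: robust_al.
Qed.

End Quantization.

Section Complexity.
Variables (R : realType) (D K : nat) (a b : R).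
Variables (theta : 'rV[R]_K -> 'rV[R]_D) (U : R).

Lemma complexity_ge0 (P : {set 'I_K}) : (0 <= complexity a b theta U P)%E.
Proof. by apply: le_ereal_inf_tmp => _ [al _ <-]; rewrite lee_fin. Qed.

Lemma complexity_attained (P : {set 'I_K}) (al : 'I_K -> R) :
  qualified a b theta U P al -> exists2 al', qualified a b theta U P al' &
    complexity a b theta U P = (rep_set_size a b P al')%:R%:E.
Proof. by move=> qual_al; apply: ereal_inf_nat_attained; exists al. Qed.

Lemma complexity_pinfty (P : {set 'I_K}) :
  (forall al, ~ qualified a b theta U P al) -> complexity a b theta U P = +oo%E.
Proof. by move=> no_qual; apply/ereal_inf_pinfty => y [al /no_qual]. Qed.

End Complexity.

Section Covering.
Variables (R : realType) (D K : nat) (a b : R).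
Hypotheses (a_gt0 : 0 < a) (lt_ab : a < b).

Lemma spectrum_preserved_by_pattern (zpre : 'rV[R]_K) :
  preserved_by a b (spiking_pattern a (spectrum_of a b zpre)) (spectrum_of a b zpre).
Proof.
move=> k; rewrite !inE !mxE /clamp_coord -ltNge.
case: ifPn => [_|].
  by split=> // a_le0; have := lt_le_trans a_gt0 a_le0; rewrite ltxx.
rewrite -leNgt => a_le; case: ifPn => [_|]; last rewrite -leNgt => le_b.
  by split=> [_|/(lt_trans lt_ab)]; rewrite ?ltxx // lexx ltW.
by split=> [_|]; rewrite ?a_le ?le_b // ltNge a_le.
Qed.

Variables (samples : set 'rV[R]_D) (phi : 'rV[R]_D -> 'rV[R]_K).
Variables (theta : 'rV[R]_K -> 'rV[R]_D) (U : R).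

Lemma essence_le_sum_rep_set_size (alF : {set 'I_K} -> 'I_K -> R) :
  ess_compatible a b samples phi theta (U / 2) ->
  (forall Pm, Pm \in patterns a b samples phi ->
     qualified a b theta (U / 2) Pm (alF Pm)) ->
  (essence samples U <=
     (\sum_(Pm in patterns a b samples phi) rep_set_size a b Pm (alF Pm))%:R%:E)%E.
Proof.
move=> compat qual; set pats := patterns a b samples phi.
pose pts :=
  [seq theta (grid_spectrum c) | Pm <- enum pats, c <- enum (grid a b Pm (alF Pm))].
apply: (@le_trans _ _ (#|` [fset x in pts]|%fset%:R)%:E).
  apply: ereal_inf_lbound; exists [fset x in pts]%fset => // x x_sample.
  set z := encoder a b phi x.
  have Pm_pat : spiking_pattern a z \in pats by rewrite inE; apply/asboolP; exists x.
  have [c close_c] :=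
    qualified_grid_cover lt_ab (qual _ Pm_pat) (spectrum_preserved_by_pattern _).
  exists (theta (grid_spectrum c)).
    by rewrite inE /=; apply: allpairs_f_dep; rewrite mem_enum.
  apply: le_trans (ler_enorm_distD (theta z) _ _) _.
  by have := compat x x_sample; lra.
rewrite lee_fin ler_nat card_fseq (leq_trans (size_undup _)) //.
rewrite size_allpairs_dep sumnE big_map big_enum /=; apply: leq_sum => Pm _.
by rewrite -cardE card_grid.
Qed.

Lemma essence_le_complexity_sum :
  ess_compatible a b samples phi theta (U / 2) ->
  (essence samples U <=
     \sum_(Pm in patterns a b samples phi) complexity a b theta (U / 2) Pm)%E.
Proof.
move=> compat; set pats := patterns a b samples phi.
have [all_qual|/existsNP[Pm /not_implyP[Pm_pat /forallNP no_qual]]] :=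
  pselect (forall Pm, Pm \in pats -> exists al, qualified a b theta (U / 2) Pm al).
- have opt_Pm Pm : exists al, Pm \in pats -> qualified a b theta (U / 2) Pm al /\
      complexity a b theta (U / 2) Pm = (rep_set_size a b Pm al)%:R%:E.
    have [Pm_pat|] := boolP (Pm \in pats); last by exists (fun=> 0).
    have [al qual_al] := all_qual Pm Pm_pat.
    by have [al' qual_al' ->] := complexity_attained qual_al; exists al'.
  have [alF opt] := fin_all_exists opt_Pm.
  rewrite (eq_bigr _ (fun Pm Pm_pat => proj2 (opt Pm Pm_pat))) sumEFin -natr_sum.
  by apply: essence_le_sum_rep_set_size => // Pm /opt[].
- rewrite (_ : (\sum_(Pm in pats) _)%E = +oo%E) ?leey //.
  apply/esum_eqyP => [P _|].
    by rewrite -ltNye (lt_le_trans (ltNyr 0)) ?complexity_ge0.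
  by exists Pm; rewrite mem_index_enum complexity_pinfty.
Qed.

End Covering.

Theorem theorem1 (R : realType) (D K : nat) (samples : set 'rV[R]_D)
  (lam mu : R)
  (Hbox : forall x, samples x -> forall d : 'I_D, lam <= x ord0 d <= mu)
  (U : R) (HU : 0 < U) (a b : R) (Ha : 0 < a) (Hab : a < b) :
  (log2e (essence samples U) <= MDL_dagger K a b samples U)%E.
Proof.
apply: le_ereal_inf_tmp => _ [[phi theta] /= compat <-].
exact/le_log2e/(essence_le_complexity_sum Ha Hab compat).
Qed.
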